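(* Let $n\ge 2$ and let $c=s_{n-1}s_{n-2}\cdots s_2s_1\in S_n$. For every $v\in S_n$ with $v\le c$ in the Bruhat order, one has $\mathcal I_v=\operatorname{in}_{\mathbf w}(\mathcal I_v)$.
   Context: Notation: $[a,b]=\{a,a+1,\dots,b\}$, $[b]=[1,b]$. $S_n$ is the symmetric group with simple reflections $s_i=(i,i+1)$ and Bruhat order $\le$. For $v\in S_n$ and $k\in[n]$ put $v([k])=\{v(1),\dots,v(k)\}$. For $k$-element subsets $I=\{a_1<\dots<a_k\}$, $K=\{b_1<\dots<b_k\}$ of $[n]$ write $I\le K$ iff $a_r\le b_r$ for all $r$. Let $A_n=\mathbb C[p_I : I\subseteq[n],\,1\le |I|\le n-1]$ (Plücker coordinates). For a sequence $I=(i_1,\dots,i_k)$ of pairwise distinct elements of $[n]$ set $p_I=\mathrm{sgn}(\sigma)\,p_{\{i_1,\dots,i_k\}}$, where $\sigma$ is the permutation sorting the sequence increasingly; if a sequence has repeated entries, $p_I=0$. Plücker relations: for sequences $J=(j_1,\dots,j_e)$, $L=(l_1,\dots,l_d)$ of distinct elements of $[n]$ with $1\le e\le d\le n-1$ and $k\in[e]$, $R^k_{J,L}=p_Jp_L-\sum_{1\le r_1<\dots<r_k\le d}p_{J'}p_{L'}$, where $J'$ is obtained from $J$ by replacing $j_t$ by $l_{r_t}$ ($t=1,\dots,k$) and $L'$ is obtained from $L$ by replacing $l_{r_t}$ by $j_t$. $\mathcal I_{\mathrm{Fl}_n}$ is the ideal generated by all $R^k_{J,L}$ (the ideal of the flag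 variety $\mathrm{Fl}_n$ in $\prod_{k=1}^{n-1}\mathbb P(\wedge^k\mathbb C^n)$), and for $v\in S_n$, $\mathcal I_v=\mathcal I_{\mathrm{Fl}_n}+(p_I : I\not\le v([|I|]))$ is the ideal of the Schubert variety $X_v=\overline{BvB/B}$. Weight vector: $\mathbf w_I=\#\{a\in I: |I|\le a\le n-1\}$; the weight of a monomial $\prod p_I^{\alpha_I}$ is $\sum\alpha_I\mathbf w_I$; for $f\in A_n$, $\operatorname{in}_{\mathbf w}(f)$ is the sum of the terms of $f$ of minimal weight, and for an ideal $\mathcal I$, $\operatorname{in}_{\mathbf w}(\mathcal I)$ is the ideal generated by all $\operatorname{in}_{\mathbf w}(f)$, $f\in\mathcal I$. *)

From mathcomp Require Import all_boot all_order all_algebra all_fingroup.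
From mathcomp Require Import Rstruct complex.
From mathcomp Require Import mpoly.
From Stdlib Require Import Relation_Operators.

Set Implicit Arguments.
Unset Strict Implicit.
Unset Printing Implicit Defensive.

Import GRing.Theory.
Local Open Scope ring_scope.

Definition CC : fieldType := complex Rdefinitions.R.

(* Elements of [n] = {1,...,n} are represented by 'I_n = {0,...,n-1}:
   the ordinal a stands for the integer a+1. *)

Definition PI (n : nat) := {I : {set 'I_n} | (0 < #|I|)%N && (#|I| < n)%N}.

Definition nvar (n : nat) : nat := #|{: PI n}|.

(* A_n = C[p_I : I subset of [n], 1 <= |I| <= n-1];  p_I = 'X_(enum_rank I) *)
Definition An (n : nat) := {mpoly CC[nvar n]}.

Definition pvar (n : nat) (I : PI n) : An n := 'X_(enum_rank I).

(* p_I for a set I (zero if I is not of admissible size; never used then) *)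
Definition pset (n : nat) (I : {set 'I_n}) : An n :=
  if insub I is Some x then pvar x else 0.

Definition ninv (s : seq nat) : nat :=
  #|[set p : 'I_(size s) * 'I_(size s) |
      (p.1 < p.2)%N && (nth 0%N s p.2 < nth 0%N s p.1)%N]|.

(* p_J for a sequence J (elements of [n] coded as naturals < n):
   sgn(sorting permutation) * p_{set of J}, and 0 if J has repetitions.
   sgn of the sorting permutation = (-1)^(number of inversions). *)
Definition pseq (n : nat) (J : seq nat) : An n :=
  if uniq J && all (fun a => a < n)%N J
  then (-1) ^+ ninv J * pset [set a : 'I_n | val a \in J]
  else 0.

(* Pluecker relation R^k_{J,L}; positions are 0-indexed here.
   The increasing tuples 1 <= r_1 < ... < r_k <= d are the k-subsets R of
   'I_d listed increasingly (rs); J' replaces j_t by l_{r_t} (t = 1..k), and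
   L' replaces l_{r_t} by j_t. *)
Definition Jprime (k : nat) (J L : seq nat) (rs : seq nat) : seq nat :=
  [seq (if (t < k)%N then nth 0%N L (nth 0%N rs t) else nth 0%N J t)
  | t <- iota 0 (size J)].

Definition Lprime (J L : seq nat) (rs : seq nat) : seq nat :=
  [seq (if s \in rs then nth 0%N J (index s rs) else nth 0%N L s)
  | s <- iota 0 (size L)].

Definition incr_list (d : nat) (R : {set 'I_d}) : seq nat :=
  sort leq [seq val r | r in R].

Definition plucker_rel (n k : nat) (J L : seq nat) : An n :=
  pseq n J * pseq n L -
  \sum_(R : {set 'I_(size L)} | #|R| == k)
     pseq n (Jprime k J L (incr_list R)) * pseq n (Lprime J L (incr_list R)).

Definition is_plucker_gen (n : nat) (f : An n) : Prop :=
  exists (J L : seq nat) (k : nat),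
    [/\ uniq J, uniq L, all (fun a => a < n)%N J, all (fun a => a < n)%N L &
    [/\ (1 <= size J)%N, (size J <= size L)%N, (size L <= n.-1)%N,
        (1 <= k <= size J)%N & f = plucker_rel n k J L]].

Definition ideal_gen (R : comNzRingType) (S : R -> Prop) (f : R) : Prop :=
  exists gs cs : seq R,
    [/\ size cs = size gs, (forall g, g \in gs -> S g) &
        f = \sum_(i < size gs) cs`_i * gs`_i].

Definition gale_le (n : nat) (I K : {set 'I_n}) : bool :=
  (#|I| == #|K|) &&
  all2 leq (sort leq [seq val a | a in I]) (sort leq [seq val a | a in K]).

Definition vfirst (n : nat) (v : 'S_n) (k : nat) : {set 'I_n} :=
  [set v i | i : 'I_n & (i < k)%N].

Definition schubert_gen (n : nat) (v : 'S_n) (f : An n) : Prop :=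
  is_plucker_gen f \/
  exists I : PI n, ~~ gale_le (val I) (vfirst v #|val I|) /\ f = pvar I.

Definition schubert_ideal (n : nat) (v : 'S_n) : An n -> Prop :=
  ideal_gen (@schubert_gen n v).

Definition wI (n : nat) (I : PI n) : nat :=
  #|[set a in val I | (#|val I| <= (val a).+1 <= n.-1)%N]|.

Definition mweight (n : nat) (m : 'X_{1..nvar n}) : nat :=
  (\sum_(i < nvar n) m i * wI (enum_val i))%N.

Definition in_w (n : nat) (f : An n) : An n :=
  \sum_(m <- msupp f | all (fun m' => mweight m <= mweight m')%N (msupp f))
     f@_m *: 'X_[m].

Definition initial_ideal (n : nat) (I : An n -> Prop) : An n -> Prop :=
  ideal_gen (fun g => exists f, I f /\ g = in_w f).

Definition perm_length (n : nat) (u : 'S_n) : nat :=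
  #|[set p : 'I_n * 'I_n | (p.1 < p.2)%N && (u p.2 < u p.1)%N]|.

Definition bruhat_step (n : nat) (u w : 'S_n) : Prop :=
  exists i j : 'I_n, i != j /\ w = (u * tperm i j)%g /\
                     (perm_length u < perm_length w)%N.

Definition bruhat_le (n : nat) (u w : 'S_n) : Prop :=
  clos_refl_trans _ (@bruhat_step n) u w.

(* simple reflection s_{i+1} = (i+1, i+2), coded on 'I_n *)
Definition sref (n i : nat) : 'S_n :=
  match n return 'S_n with
  | 0 => 1%g
  | n'.+1 => tperm (inord i : 'I_n'.+1) (inord i.+1)
  end.

(* c = s_{n-1} s_{n-2} ... s_1 as a composition of functions.  In mathcomp
   (s * t) x = t (s x), so this is the product s_1 * s_2 * ... * s_{n-1}. *)
Definition coxc (n : nat) : 'S_n := (\prod_(i < n.-1) sref n i)%g.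

(* If [v <= c] then [v(p) >= p - 1] for every [p] ([hessenberg v]): this holds
   for [c] and passes down the Bruhat order, because a step [u < u t] from a
   non-Hessenberg [u] to a Hessenberg [u t] would swap away an inversion of [u]
   and so could not increase the length.  Hence every Pluecker coordinate [p_I]
   not killed in [I_v], i.e. with [I <= v([|I|])], contains [1, ..., |I| - 1],
   and its weight [w_I] is [1] if [n] is not in [I] and [0] otherwise.  In a
   Pluecker relation the multiset [J' + L'] is always [J + L], so each term
   either contains a killed coordinate or has weight [2 - #(n in J + L)].  So
   [I_v] is generated by [w]-homogeneous elements of itself, and a homogeneous
   ideal coincides with its initial ideal. *)

From HB Require Import structures.
From Pilot Require Import Defs.
From mathcomp Require Import all_boot all_order all_algebra all_fingroup.
From mathcomp Require Import mpoly zify.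

Set Implicit Arguments.
Unset Strict Implicit.
Unset Printing Implicit Defensive.

Import GRing.Theory.
Local Open Scope ring_scope.

Section IdealGen.
Variable R : comNzRingType.
Implicit Types (S T : R -> Prop) (f g : R).

Lemma ideal_gen0 S : ideal_gen S 0.
Proof. by exists [::], [::]; split => //; rewrite big_ord0. Qed.

Lemma ideal_genD S f g : ideal_gen S f -> ideal_gen S g -> ideal_gen S (f + g).
Proof.
move=> [gs1 [cs1 [e1 h1 ->]]] [gs2 [cs2 [e2 h2 ->]]].
exists (gs1 ++ gs2), (cs1 ++ cs2); split.
- by rewrite !size_cat e1 e2.
- by move=> x; rewrite mem_cat => /orP [] ?; [apply: h1 | apply: h2].
rewrite size_cat big_split_ord /=; congr (_ + _); apply: eq_bigr => i _.
  by rewrite !nth_cat e1 ltn_ord.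
by rewrite !nth_cat e1 ltnNge leq_addr /= addKn.
Qed.

Lemma ideal_genMl S c f : ideal_gen S f -> ideal_gen S (c * f).
Proof.
move=> [gs [cs [e h ->]]]; exists gs, [seq c * x | x <- cs]; split => //.
  by rewrite size_map.
rewrite big_distrr /=; apply: eq_bigr => i _.
by rewrite (nth_map 0) ?mulrA // e.
Qed.

Lemma ideal_genN S f : ideal_gen S f -> ideal_gen S (- f).
Proof. by rewrite -mulN1r; apply: ideal_genMl. Qed.

Lemma ideal_genB S f g : ideal_gen S f -> ideal_gen S g -> ideal_gen S (f - g).
Proof. by move=> ? ?; apply/ideal_genD/ideal_genN. Qed.

Lemma ideal_gen_mem S g : S g -> ideal_gen S g.
Proof.
move=> Sg; exists [:: g], [:: 1]; split => [//|x|]; last by rewrite big_ord1 mul1r.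
by rewrite inE => /eqP ->.
Qed.

Lemma ideal_gen_sum S (I : Type) (r : seq I) (P : pred I) (F : I -> R) :
  (forall i, P i -> ideal_gen S (F i)) -> ideal_gen S (\sum_(i <- r | P i) F i).
Proof. exact: (big_ind (ideal_gen S) (ideal_gen0 S) (@ideal_genD S)). Qed.

Lemma ideal_gen_sub S T f :
  (forall g, S g -> ideal_gen T g) -> ideal_gen S f -> ideal_gen T f.
Proof.
move=> ST [gs [cs [_ Sgs ->]]]; apply: ideal_gen_sum => i _.
exact/ideal_genMl/ST/Sgs/mem_nth.
Qed.

End IdealGen.

Section HomogeneousIdeal.
Variables (k : nat) (R : comNzRingType) (mf : measure k).
Local Notation P := {mpoly R[k]}.
Implicit Types (S T : P -> Prop) (p f g s t : P).

Definition initial_form p : P :=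
  \sum_(m <- msupp p | all (fun m' => mf m <= mf m')%N (msupp p)) p@_m *: 'X_[m].

Lemma initial_form_dhomog d p : p \is d.-homog for mf -> initial_form p = p.
Proof.
move=> /dhomogP hom_p; rewrite [RHS]mpolyE /initial_form big_seq_cond.
rewrite [RHS]big_seq; apply: eq_bigl => m; apply: andb_idr => mp.
by apply/allP => m' m'p; rewrite (hom_p _ mp) (hom_p _ m'p).
Qed.

Lemma initial_form_pihomog p : exists d, initial_form p = pihomog mf d p.
Proof.
have [->|p_neq0] := eqVneq p 0.
  by exists 0%N; rewrite pihomog0 /initial_form msupp0 big_nil.
pose attained d := has (fun m => mf m == d) (msupp p).
have attained_lead : exists d, attained d.
  by exists (mf (mlead p)); apply/hasP; exists (mlead p); rewrite ?mlead_supp.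
case: (ex_minnP attained_lead) => d /hasP [m0 m0p /eqP <-] min_d.
exists (mf m0); rewrite /initial_form pihomogE big_seq_cond [RHS]big_seq_cond.
apply: eq_bigl => m; case mp: (m \in msupp p) => //=.
apply/allP/eqP => [le_m|-> m' m'p]; last by apply/min_d/hasP; exists m'.
by apply/anti_leq; rewrite le_m //= min_d //; apply/hasP; exists m.
Qed.

Definition homog_ideal S :=
  forall d f, ideal_gen S f -> ideal_gen S (pihomog mf d f).

Lemma homog_ideal_initial S : homog_ideal S ->
  forall f, ideal_gen S f <->
            ideal_gen (fun g => exists f, ideal_gen S f /\ g = initial_form f) f.
Proof.
move=> homS f; split => [Sf|].
  rewrite (pihomog_partitionE (leqnn (mmeasure mf f))).
  apply: ideal_gen_sum => d _; apply: ideal_gen_mem; exists (pihomog mf d f).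
  by rewrite (initial_form_dhomog (pihomogP mf d f)); split => //; apply: homS.
apply: ideal_gen_sub => _ [g [Sg ->]].
by have [d ->] := initial_form_pihomog g; apply: homS.
Qed.

Lemma homog_ideal_dhomog_gen S :
  (forall g, S g -> exists d, g \is d.-homog for mf) -> homog_ideal S.
Proof.
move=> homS d _ [gs [cs [_ Sgs ->]]]; rewrite raddf_sum.
apply: ideal_gen_sum => i _; have Sg := Sgs _ (mem_nth 0 (ltn_ord i)).
have [e hom_g] := homS _ Sg.
rewrite (pihomog_partitionE (leqnn (mmeasure mf cs`_i))) big_distrl raddf_sum.
apply: ideal_gen_sum => j _ /=.
have hom_jg := dhomogM (pihomogP mf j cs`_i) hom_g.
have [<-|ne] := eqVneq (j + e)%N d.
  by rewrite pihomog_dE //; apply/ideal_genMl/ideal_gen_mem.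
by rewrite (pihomog_ne0 ne hom_jg); apply: ideal_gen0.
Qed.

Definition homog_elements S g := (exists d, g \is d.-homog for mf) /\ ideal_gen S g.

Lemma homog_ideal_homog_elements S :
  (forall g, S g -> ideal_gen (homog_elements S) g) -> homog_ideal S.
Proof.
move=> genS d f /(ideal_gen_sub genS) Hf.
apply: (@ideal_gen_sub _ (homog_elements S)); first by move=> g [].
by apply: homog_ideal_dhomog_gen Hf => g [].
Qed.

Definition ideal_plus_dhomog T d t :=
  exists2 a, ideal_gen T a & t - a \is d.-homog for mf.

Lemma ideal_plus_dhomog_ideal T d t : ideal_gen T t -> ideal_plus_dhomog T d t.
Proof. by exists t; rewrite ?subrr ?dhomog0. Qed.

Lemma ideal_plus_dhomog_dhomog T d t :
  t \is d.-homog for mf -> ideal_plus_dhomog T d t.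
Proof. by exists 0; rewrite ?subr0 //; apply: ideal_gen0. Qed.

Lemma ideal_plus_dhomogD T d s t : ideal_plus_dhomog T d s ->
  ideal_plus_dhomog T d t -> ideal_plus_dhomog T d (s + t).
Proof.
move=> [a Ta hom_s] [b Tb hom_t]; exists (a + b); first exact: ideal_genD.
by rewrite opprD addrACA rpredD.
Qed.

Lemma ideal_plus_dhomogN T d t :
  ideal_plus_dhomog T d t -> ideal_plus_dhomog T d (- t).
Proof.
move=> [a Ta hom_t]; exists (- a); first exact: ideal_genN.
have -> : - t - - a = - (t - a) by rewrite opprD.
by rewrite rpredN.
Qed.

Lemma ideal_plus_dhomog_sum T d (I : Type) (r : seq I) (Q : pred I) (F : I -> P) :
  (forall i, Q i -> ideal_plus_dhomog T d (F i)) ->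
  ideal_plus_dhomog T d (\sum_(i <- r | Q i) F i).
Proof.
apply: big_ind; [exact/ideal_plus_dhomog_dhomog/dhomog0 | exact: ideal_plus_dhomogD].
Qed.

Lemma homog_elements_ideal_plus_dhomog S d g : ideal_gen S g ->
  ideal_plus_dhomog (homog_elements S) d g -> ideal_gen (homog_elements S) g.
Proof.
move=> Sg [a Ha hom_ga]; rewrite -(subrK a g); apply: ideal_genD (Ha).
apply: ideal_gen_mem; split; first by exists d.
by apply: ideal_genB Sg (ideal_gen_sub _ Ha) => ? [].
Qed.

End HomogeneousIdeal.

Local Close Scope ring_scope.

Lemma tpermE (T : finType) (x y z : T) :
  tperm x y z = if z == x then y else if z == y then x else z.
Proof.
case: tpermP => [->|->|/eqP/negbTE-> /eqP/negbTE->]; rewrite ?eqxx //.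
by case: eqP => [->|].
Qed.

Section BruhatHessenberg.
Variable n : nat.
Implicit Types u w : 'S_n.

Definition hessenberg u := forall p : 'I_n, p <= (u p).+1.

(* Swapping the values at positions [q < p] maps the inversions [(x, y)] of the
   new permutation injectively to inversions of [u]: to [(tau x, tau y)] when
   [tau] keeps the pair ordered, and to [(x, y)] itself otherwise. *)
Lemma perm_length_swap_inversion u (q p : 'I_n) : q < p -> u p < u q ->
  perm_length (u * tperm (u q) (u p))%g <= perm_length u.
Proof.
move=> qp upq; rewrite -tpermJ -conjgC; set tau := tperm q p.
pose swap (xy : 'I_n * 'I_n) :=
  if tau xy.1 < tau xy.2 then (tau xy.1, tau xy.2) else xy.
rewrite /perm_length -(card_in_imset (f := swap)).
  apply/subset_leq_card/subsetP => z /imsetP [[x y]].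
  rewrite !inE /= !permM /swap /= => /andP [xy tau_yx] ->.
  case: ifP => [-> //| /negbT]; rewrite -leqNgt xy /=.
  by move: xy tau_yx; rewrite /tau; do 2!case: tpermP => [->|->|_ _]; lia.
move=> [x1 y1] [x2 y2]; rewrite !inE /= /swap => /andP [xy1 _] /andP [xy2 _].
have tauK := tpermK q p.
case: ifP => t1; case: ifP => t2 [e1 e2].
- by rewrite -[x1]tauK e1 tauK -[y1]tauK e2 tauK.
- by move: t2; rewrite -e1 -e2 !tauK xy1.
- by move: t1; rewrite e1 e2 !tauK xy2.
- by rewrite e1 e2.
Qed.

Lemma hessenberg_bruhat_step u w : bruhat_step u w -> hessenberg w -> hessenberg u.
Proof.
move=> [a [b [_ [-> lt_uw]]]] hw p.
wlog upa : a b lt_uw hw / u p = a.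
  move=> gen; have [upa|upa] := eqVneq (u p) a; first exact: (gen a b lt_uw hw upa).
  have [upb|upb] := eqVneq (u p) b; first by apply: (gen b a); rewrite // tpermC.
  by have := hw p; rewrite permM tpermD // eq_sym.
pose q := (u^-1)%g b; have uq : u q = b by rewrite permKV.
have := hw p; have := hw q; rewrite !permM uq upa tpermL tpermR => hq hp.
have [ba|ab] := leqP b a; first lia.
have [pq|qp] := leqP p q; first lia.
have := perm_length_swap_inversion (u := u) qp; rewrite uq upa => /(_ ab).
by rewrite tpermC leqNgt lt_uw.
Qed.

Lemma hessenberg_bruhat_le u w : bruhat_le u w -> hessenberg w -> hessenberg u.
Proof.
elim=> [x y /hessenberg_bruhat_step //| x //| x y z _ IHxy _ IHyz hz].
exact/IHxy/IHyz.
Qed.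

End BruhatHessenberg.

Lemma coxc_prefixE m j (p : 'I_m.+1) : j <= m ->
  ((\prod_(i < j) sref m.+1 i)%g p : nat) =
  if p == 0 :> nat then j else if p <= j then p.-1 else p.
Proof.
elim: j => [|j IH] le_jm; first by rewrite big_ord0 perm1; case: (p : nat).
rewrite big_ord_recr /= permM tpermE.
move: ((\prod_(i < j) sref m.+1 i)%g p) (IH (ltnW le_jm)) => x def_x.
have [lt_j lt_Sj] : j < m.+1 /\ j.+1 < m.+1 by lia.
rewrite -!(inj_eq val_inj) !(fun_if val) /= (inordK lt_j) (inordK lt_Sj) def_x.
by case: (p : nat) => [|r] /=; repeat case: ifP; lia.
Qed.

Lemma hessenberg_coxc n : 2 <= n -> hessenberg (coxc n).
Proof.
case: n => [//|m] _ p; rewrite /coxc /= coxc_prefixE //.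
by repeat case: ifP; lia.
Qed.

Lemma all2_nth (S T : Type) (r : S -> T -> bool) x0 y0 s t i :
  all2 r s t -> i < size s -> r (nth x0 s i) (nth y0 t i).
Proof.
elim: s t i => [|x s IH] [|y t] [|i] //= /andP [rxy rst] lt_is //.
exact: IH.
Qed.

Lemma sorted_ltn_nth_geq (s : seq nat) r :
  sorted ltn s -> r < size s -> r <= nth 0 s r.
Proof.
move=> ss; elim: r => [|r IH] lt_rs //.
have lt_nth := sorted_ltn_nth ltn_trans 0 ss r r.+1 (ltnW lt_rs) lt_rs (ltnSn r).
exact: leq_ltn_trans (IH (ltnW lt_rs)) lt_nth.
Qed.

Lemma sorted_ltn_nth_leq (s : seq nat) r :
  sorted ltn s -> (forall b, b <= r -> b \in s) -> nth 0 s r <= r.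
Proof.
move=> ss prefix_s; move: (ss); rewrite ltn_sorted_uniq_leq => /andP [_ ss_le].
have le_nth := sorted_leq_nth leq_trans leqnn 0 ss_le.
have idx_lt b : b <= r -> index b s < size s by rewrite index_mem => /prefix_s.
have nth_idx b : b <= r -> nth 0 s (index b s) = b by move/prefix_s/nth_index.
have le_idx b : b <= r -> b <= index b s.
  elim: b => [//|b IH] le_br; apply: leq_ltn_trans (IH (ltnW le_br)) _.
  rewrite ltnNge; apply/negP => le_idx.
  have := le_nth _ _ (idx_lt _ le_br) (idx_lt _ (ltnW le_br)) le_idx.
  by rewrite !nth_idx ?ltnn // ltnW.
have r_lt_s := leq_ltn_trans (le_idx r (leqnn r)) (idx_lt r (leqnn r)).
by have := le_nth _ _ r_lt_s (idx_lt r (leqnn r)) (le_idx r (leqnn r)); rewrite nth_idx.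
Qed.

Section GaleOrder.
Variable n : nat.
Implicit Types I K : {set 'I_n}.

Definition sorted_vals I : seq nat := sort leq [seq val a | a in I].

Lemma sorted_ltn_vals I : sorted ltn (sorted_vals I).
Proof.
rewrite ltn_sorted_uniq_leq sort_uniq (sort_sorted leq_total) andbT.
by rewrite map_inj_uniq ?enum_uniq //; apply: val_inj.
Qed.

Lemma mem_sorted_vals I (a : 'I_n) : (val a \in sorted_vals I) = (a \in I).
Proof. by rewrite mem_sort (mem_map val_inj) mem_enum. Qed.

Lemma size_sorted_vals I : size (sorted_vals I) = #|I|.
Proof. by rewrite size_sort size_map cardE. Qed.

Lemma gale_le_prefix I K : gale_le I K ->
  (forall a : 'I_n, a < #|K|.-1 -> a \in K) ->
  forall a : 'I_n, a < #|I|.-1 -> a \in I.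
Proof.
move=> /andP [/eqP cardIK]; rewrite -/(sorted_vals I) -/(sorted_vals K) => le_IK.
move=> prefix_K a lt_a.
have prefix_vals b : b <= a -> b \in sorted_vals K.
  move=> le_ba; have lt_bn : b < n by have := max_card K; rewrite card_ord; lia.
  rewrite -[b]/(val (Ordinal lt_bn)) mem_sorted_vals prefix_K //= -cardIK.
  exact: leq_ltn_trans le_ba lt_a.
have lt_aI : a < size (sorted_vals I) by rewrite size_sorted_vals; lia.
have le_IKa := all2_nth 0 0 le_IK lt_aI.
have ge_Ia := sorted_ltn_nth_geq (sorted_ltn_vals I) lt_aI.
have le_Ka := sorted_ltn_nth_leq (sorted_ltn_vals K) prefix_vals.
have nth_Ia : nth 0 (sorted_vals I) a = a by lia.
by rewrite -mem_sorted_vals /= -nth_Ia mem_nth.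
Qed.

Lemma card_ord_ltn t : t <= n -> #|[set a : 'I_n | a < t]| = t.
Proof.
move=> le_tn; have -> : [set a : 'I_n | a < t] = widen_ord le_tn @: [set: 'I_t].
  apply/setP => a; rewrite inE; apply/idP/imsetP => [lt_at|[b _ ->]]; last exact: (ltn_ord b).
  by exists (Ordinal lt_at); rewrite ?inE //; apply: val_inj.
by rewrite card_imset ?cardsT ?card_ord // => b c /(congr1 val) /= /ord_inj.
Qed.

Lemma hessenberg_vfirst_prefix (v : 'S_n) s : hessenberg v ->
  forall a : 'I_n, a < s.-1 -> a \in vfirst v s.
Proof.
move=> hv a lt_as; apply/imsetP; exists ((v^-1)%g a); last by rewrite permKV.
by rewrite inE; have := hv ((v^-1)%g a); rewrite permKV; lia.
Qed.

Lemma wI_gale (v : 'S_n) (x : PI n) (top : 'I_n) : val top = n.-1 ->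
  hessenberg v -> gale_le (val x) (vfirst v #|val x|) ->
  wI x = (top \notin val x) :> nat.
Proof.
(* [I] is [low = {0, ..., s - 2}] plus one element, counted by [w_I] unless it
   is [top]. *)
move=> def_top hv gale_x; rewrite /wI; set I := val x; set s := #|I|.
have /andP [s_gt0 lt_sn] : 0 < s < n := valP x.
pose low := [set a : 'I_n | a < s.-1].
have low_sub : low \subset I.
  apply/subsetP => a; rewrite inE; apply: gale_le_prefix (gale_x) _ a.
  have /andP [/eqP <- _] := gale_x; exact: hessenberg_vfirst_prefix.
have card_low : #|low| = s.-1 by rewrite card_ord_ltn //; lia.
have top_low : top \notin low by rewrite inE def_top; lia.
have -> : [set a in I | s <= (val a).+1 <= n.-1] = (I :\: low) :\ top.
  apply/setP => a; rewrite !inE -(inj_eq val_inj) def_top.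
  by have := ltn_ord a; case: (a \in I); rewrite ?andbF //= => ?; apply/idP/idP; lia.
have := cardsD1 top (I :\: low); rewrite [#|I :\: low|]cardsD (setIidPr low_sub) card_low inE.
rewrite (negbTE top_low) /=; have -> : s - s.-1 = 1 by lia.
case: (top \in I) => /=; rewrite ?add1n ?add0n; first by case=> <-.
by move=> <-.
Qed.

End GaleOrder.

Section PluckerExchange.
Variables (k : nat) (J L rs : seq nat).
Hypotheses (rs_uniq : uniq rs) (rs_lt : all (fun r => r < size L) rs).
Hypotheses (size_rs : size rs = k) (le_kJ : k <= size J).

Let unchosen := [seq s <- iota 0 (size L) | s \notin rs].

Lemma perm_iota_chosen : perm_eq (iota 0 (size L)) (rs ++ unchosen).
Proof.
rewrite -(perm_filterC (mem rs)) perm_cat2r; apply: uniq_perm.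
- exact/filter_uniq/iota_uniq.
- exact: rs_uniq.
move=> s; rewrite mem_filter mem_iota /=; apply/andP/idP => [[] //|s_rs].
by split=> //; have := allP rs_lt s s_rs.
Qed.

Lemma JprimeE : Jprime k J L rs = [seq nth 0 L r | r <- rs] ++ drop k J.
Proof.
rewrite /Jprime -(subnKC le_kJ) iotaD map_cat add0n; congr (_ ++ _).
  rewrite -{2}(mkseq_nth 0 rs) /mkseq -map_comp size_rs.
  by apply/eq_in_map => t; rewrite mem_iota => /andP [_ ->].
rewrite -[RHS](@take_oversize _ (size J - k)) ?size_drop //.
rewrite -(map_nth_iota 0) //; apply/eq_in_map => t.
by rewrite mem_iota => /andP [le_kt _]; rewrite ltnNge le_kt.
Qed.

Lemma perm_Lprime :
  perm_eq (Lprime J L rs) (take k J ++ [seq nth 0 L s | s <- unchosen]).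
Proof.
rewrite /Lprime; set h := fun s => _.
apply: perm_trans (perm_map h perm_iota_chosen) _; rewrite map_cat.
have -> : map h rs = take k J.
  rewrite -{1}(mkseq_nth 0 rs) /mkseq -map_comp size_rs -(map_nth_iota0 0 le_kJ).
  apply/eq_in_map => t; rewrite mem_iota /= => lt_tk.
  by rewrite /h mem_nth ?size_rs // index_uniq ?size_rs.
have -> // : map h unchosen = [seq nth 0 L s | s <- unchosen].
by apply/eq_in_map => s; rewrite mem_filter /h => /andP [/negbTE ->].
Qed.

Lemma perm_Jprime_Lprime : perm_eq (Jprime k J L rs ++ Lprime J L rs) (J ++ L).
Proof.
have perm_L : perm_eq L [seq nth 0 L s | s <- rs ++ unchosen].
  by rewrite -{1}(mkseq_nth 0 L); apply: perm_map perm_iota_chosen.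
apply/seq.permP => a.
rewrite JprimeE !count_cat (seq.permP perm_Lprime) (seq.permP perm_L).
by rewrite -{3}(cat_take_drop k J) map_cat !count_cat; lia.
Qed.

End PluckerExchange.

Lemma incr_list_props d (R : {set 'I_d}) :
  [/\ uniq (incr_list R), all (fun r => r < d) (incr_list R) & size (incr_list R) = #|R|].
Proof.
rewrite /incr_list sort_uniq size_sort size_map cardE; split => //.
  by rewrite map_inj_uniq ?enum_uniq //; apply: val_inj.
by apply/allP => r; rewrite mem_sort => /mapP [a _ ->]; apply: ltn_ord.
Qed.

Local Open Scope ring_scope.

Section PluckerWeight.
Variable n : nat.
Implicit Types m : 'X_{1..nvar n}.

Lemma mweight0 : Defs.mweight (0%MM : 'X_{1..nvar n}) = 0%N.
Proof. by rewrite /Defs.mweight big1 // => i _; rewrite mnm0E. Qed.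

Lemma mweightD : {morph @Defs.mweight n : m1 m2 / (m1 + m2)%MM >-> (m1 + m2)%N}.
Proof.
by move=> m1 m2; rewrite /Defs.mweight -big_split; apply: eq_bigr => i _; rewrite mnmDE mulnDl.
Qed.

Lemma mweightU (i : 'I_(nvar n)) : Defs.mweight U_(i)%MM = wI (enum_val i).
Proof.
rewrite /Defs.mweight (bigD1 i) //= mnm1E eqxx mul1n big1 ?addn0 // => j ne_ji.
by rewrite mnm1E eq_sym (negbTE ne_ji).
Qed.

End PluckerWeight.

HB.instance Definition _ n :=
  isMeasure.Build (nvar n) (@Defs.mweight n) (@mweight0 n) (@mweightD n).

Definition plucker_weight n : measure (nvar n) := Measure.clone _ (@Defs.mweight n) _.

Lemma initial_idealE n (I : An n -> Prop) :
  initial_ideal I =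
  ideal_gen (fun g => exists f, I f /\ g = initial_form (plucker_weight n) f).
Proof. by []. Qed.

Section SchubertIdeal.
Variables (n : nat) (v : 'S_n) (top : 'I_n).
Hypotheses (hv : hessenberg v) (def_top : val top = n.-1).

Local Notation wt := (plucker_weight n).
Local Notation S := (schubert_gen v).

Lemma pvar_homog (x : PI n) : pvar x \is (wI x).-homog for wt.
Proof. by rewrite dhomogX /= mweightU enum_rankK. Qed.

Lemma sign_homog k : ((-1) ^+ k : An n) \is 0.-homog for wt.
Proof.
by rewrite -[X in X.-homog for _](mul0n k); apply: dhomogMn; rewrite dhomogN dhomog1.
Qed.

Lemma pseqP (A : seq nat) :
  pseq n A = 0 \/ exists (x : PI n) (c : An n),
    [/\ c \is 0.-homog for wt, pseq n A = c * pvar x,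
        val x = [set a : 'I_n | val a \in A] & uniq A].
Proof.
rewrite /pseq; case: ifP => [/andP [uA _]|]; last by left.
rewrite /pset; case: insubP => [x _ def_x|_]; last by rewrite mulr0; left.
by right; exists x, ((-1) ^+ ninv A); split => //; apply: sign_homog.
Qed.

Lemma pseq_mul_homog (A B : seq nat) :
  homog_elements wt S (pseq n A * pseq n B) \/
  pseq n A * pseq n B \is (2 - count_mem n.-1 (A ++ B))%N.-homog for wt.
Proof.
have [->|[x [c [hom_c -> def_x uA]]]] := pseqP A.
  by rewrite mul0r; right; apply: dhomog0.
have [->|[y [e [hom_e -> def_y uB]]]] := pseqP B.
  by rewrite mulr0; right; apply: dhomog0.
have hom := dhomogM (dhomogM hom_c (pvar_homog x)) (dhomogM hom_e (pvar_homog y)).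
have [gale_x|killed_x] := boolP (gale_le (val x) (vfirst v #|val x|)); last first.
  left; split; first by eexists; apply: hom.
  by rewrite mulrC; apply/ideal_genMl/ideal_genMl/ideal_gen_mem; right; exists x.
have [gale_y|killed_y] := boolP (gale_le (val y) (vfirst v #|val y|)); last first.
  left; split; first by eexists; apply: hom.
  by apply/ideal_genMl/ideal_genMl/ideal_gen_mem; right; exists y.
right; move: hom; rewrite (wI_gale def_top hv gale_x) (wI_gale def_top hv gale_y).
rewrite count_cat !count_uniq_mem // def_x def_y !inE def_top.
by case: (n.-1 \in A); case: (n.-1 \in B).
Qed.

Lemma schubert_gen_homog_elements g : S g -> ideal_gen (homog_elements wt S) g.
Proof.
move=> Sg.
case: (Sg) => [[J [L [k [_ _ _ _ [_ _ _ /andP [_ le_kJ] def_g]]]]] | [x [_ def_g]]].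
  apply: (homog_elements_ideal_plus_dhomog (ideal_gen_mem Sg)).
  pose d := (2 - count_mem n.-1 (J ++ L))%N.
  have term A B : perm_eq (A ++ B) (J ++ L) ->
      ideal_plus_dhomog wt (homog_elements wt S) d (pseq n A * pseq n B).
    move=> /seq.permP perm_AB; have [hom|] := pseq_mul_homog A B.
      exact/ideal_plus_dhomog_ideal/ideal_gen_mem.
    by rewrite perm_AB; apply: ideal_plus_dhomog_dhomog.
  rewrite def_g; apply: ideal_plus_dhomogD; first exact: term.
  apply/ideal_plus_dhomogN/ideal_plus_dhomog_sum => R /eqP card_R.
  have [uR ltR sizeR] := incr_list_props R.
  by apply/term/perm_Jprime_Lprime; rewrite ?sizeR ?card_R.
apply: ideal_gen_mem; split; last exact: ideal_gen_mem.
by exists (wI x); rewrite def_g pvar_homog.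
Qed.

End SchubertIdeal.

Theorem proposition3p4 (n : nat) : (2 <= n)%N ->
  forall v : 'S_n, bruhat_le v (coxc n) ->
  forall f : An n, schubert_ideal v f <-> initial_ideal (schubert_ideal v) f.
Proof.
move=> le2n v le_vc f.
have hv : hessenberg v := hessenberg_bruhat_le le_vc (hessenberg_coxc le2n).
have lt_pred_n : (n.-1 < n)%N by rewrite prednK // ltnW.
have genS := schubert_gen_homog_elements hv (top := Ordinal lt_pred_n) erefl.
rewrite initial_idealE; exact: homog_ideal_initial (homog_ideal_homog_elements genS) f.
Qed.
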